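(* For every sufficiently large $n$, the triple $(P_4,K_3,C_5)$ is both resistant and color-resistant for $n$; that is, with $H_1=P_4$, $H_2=K_3$, $F=C_5$: (i) $\mathrm{ex}^{\mathrm{col}}(n,(P_4,K_3),C_5)=\max\{\mathrm{ex}(n,P_4,C_5),\mathrm{ex}(n,K_3,C_5)\}$, and (ii) there is a $C_5$-free $n$-vertex graph $G$ with $\mathcal N(H_i,G)=\max\{\mathrm{ex}(n,P_4,C_5),\mathrm{ex}(n,K_3,C_5)\}$ for some $i\in\{1,2\}$ such that $\mathrm{ex}(n,(P_4,K_3),C_5)=\mathcal N(P_4,G)+\mathcal N(K_3,G)$.
   Context: $P_4$ is the path on $4$ vertices, $C_5$ the cycle of length $5$. $\mathcal N(H,G)$ is the number of subgraphs of $G$ isomorphic to $H$; $\mathrm{ex}(n,H,F)$ is the maximum of $\mathcal N(H,G)$ over $F$-free $n$-vertex graphs. $\mathrm{ex}(n,(H_1,H_2),F)$ is the maximum of $\mathcal N(H_1,G)+\mathcal N(H_2,G)$ over $F$-free $n$-vertex graphs $G$. For a graph $G$ with edges colored $1,2$, $G_i$ is the subgraph of edges of color $i$; $\mathrm{ex}^{\mathrm{col}}(n,(H_1,H_2),F)$ is the maximum of $\mathcal N(H_1,G_1)+\mathcal N(H_2,G_2)$ over $F$-free $n$-vertex graphs $G$ and all $2$-colorings of their edges. A tuple $(H_1,\dots,H_k,F)$ is called color-resistant for $n$ if $\mathrm{ex}^{\mathrm{col}}(n,(H_1,\dots,H_k),F)=\max_i\mathrm{ex}(n,H_i,F)$,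 and resistant for $n$ if there is an $F$-free $n$-vertex graph $G$ with $\mathcal N(H_i,G)=\max_j \mathrm{ex}(n,H_j,F)$ for some $i$ and $\mathrm{ex}(n,(H_1,\dots,H_k),F)=\sum_j\mathcal N(H_j,G)$. *)

From mathcomp Require Import all_boot.
Set Implicit Arguments. Unset Strict Implicit. Unset Printing Implicit Defensive.

Definition simple_graph (V : finType) (E : {set {set V}}) : bool :=
  [forall e in E, #|e| == 2].

Definition img_edges (V W : finType) (f : V -> W) (E : {set {set V}})
  : {set {set W}} := [set f @: (e : {set V}) | e in E].

(* Copies of H (given by its edge set EH on vertex type VH, without isolated
   vertices) in G : the subsets S of the edges of G such that the graph formed by S
   (with vertex set the endpoints of S) is isomorphic to H, i.e. S is the image of
   EH under an injective vertex map. *)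
Definition is_copy (VH W : finType) (EH : {set {set VH}}) (S : {set {set W}}) : bool :=
  [exists f : {ffun VH -> W}, injectiveb f && (S == img_edges f EH)].

Definition Ncount (VH W : finType) (EH : {set {set VH}}) (G : {set {set W}}) : nat :=
  #|[set S : {set {set W}} | (S \subset G) && is_copy EH S ]|.

Definition Ffree (VF W : finType) (EF : {set {set VF}}) (G : {set {set W}}) : bool :=
  Ncount EF G == 0.

Definition ex (n : nat) (VH VF : finType) (EH : {set {set VH}}) (EF : {set {set VF}}) : nat :=
  \max_(G : {set {set 'I_n}} | simple_graph G && Ffree EF G) Ncount EH G.

Definition ex2 (n : nat) (V1 V2 VF : finType) (E1 : {set {set V1}}) (E2 : {set {set V2}})
  (EF : {set {set VF}}) : nat :=
  \max_(G : {set {set 'I_n}} | simple_graph G && Ffree EF G) (Ncount E1 G + Ncount E2 G).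

(* ex^col(n,(H1,H2),F): a 2-coloring of the edges of G is given by the set C of
   color-1 edges; G_1 = G :&: C, G_2 = G :\: C. *)
Definition excol (n : nat) (V1 V2 VF : finType) (E1 : {set {set V1}}) (E2 : {set {set V2}})
  (EF : {set {set VF}}) : nat :=
  \max_(GC : {set {set 'I_n}} * {set {set 'I_n}} | simple_graph GC.1 && Ffree EF GC.1)
     (Ncount E1 (GC.1 :&: GC.2) + Ncount E2 (GC.1 :\: GC.2)).

Definition P4 : {set {set 'I_4}} :=
  [set e : {set 'I_4} | [exists i : 'I_4, exists j : 'I_4,
     (nat_of_ord j == i.+1) && (e == [set i; j])]].
Definition K3 : {set {set 'I_3}} :=
  [set e : {set 'I_3} | [exists i : 'I_3, exists j : 'I_3,
     (i < j) && (e == [set i; j])]].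
Definition C5 : {set {set 'I_5}} :=
  [set e : {set 'I_5} | [exists i : 'I_5, exists j : 'I_5,
     (nat_of_ord j == i.+1 %% 5) && (e == [set i; j])]].

From mathcomp Require Import all_boot zify.
Set Implicit Arguments. Unset Strict Implicit. Unset Printing Implicit Defensive.

(* The balanced complete bipartite graph on n vertices is C5-free, triangle-free and
   contains bip_P4 n paths P4; so everything follows from
   N(P4, G) + N(K3, G) <= bip_P4 n for every C5-free G on n >= C0 vertices (a colouring
   only splits G into two subgraphs). In a
   C5-free graph the neighbourhood of every vertex is sparse, so a vertex of degree at
   most (n + 6) / 3 lies on fewer than bip_P4 n - bip_P4 (n - 1) copies of P4 and K3
   and may be deleted. If all degrees exceed (n + 6) / 3, C5-freeness excludes
   triangles; then d(u) + d(v) <= n on every edge uv, each P4 is counted through its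
   middle edge uv by (d(u) - 1) (d(v) - 1) <= (n/2 - 1)^2, and Mantel's theorem
   bounds the number of edges by n^2 / 4. *)

Section Counting.
Variable T : finType.
Implicit Types (A B C : {set T}).

Lemma card_pairs_dep (T' : finType) A (B : T -> {set T'}) :
  #|[set t : T * T' | (t.1 \in A) && (t.2 \in B t.1)]| = \sum_(a in A) #|B a|.
Proof.
rewrite -sum1_card (eq_bigl (fun t : T * T' => (t.1 \in A) && (t.2 \in B t.1))) => [|t].
  rewrite -(pair_big_dep (mem A) (fun a b => b \in B a) (fun _ _ => 1)).
  by apply: eq_bigr => a _; rewrite sum1_card.
by rewrite inE.
Qed.

Lemma double_count A B (r : rel T) :
  \sum_(x in A) #|[set y in B | r x y]| = \sum_(y in B) #|[set x in A | r x y]|.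
Proof.
have cardE C (p : pred T) : #|[set y in C | p y]| = \sum_(y in C) p y.
  by rewrite -sum1dep_card big_mkcondr; apply: eq_bigr => y _; case: (p y).
rewrite (eq_bigr _ (fun x _ => cardE B (r x))) exchange_big.
by apply: eq_bigr => y _; rewrite cardE.
Qed.

Lemma sum_indicator_sub A B (F : T -> nat) : A \subset B ->
  \sum_(v in A) F v = \sum_(v in B) (v \in A) * F v.
Proof.
move=> sAB; rewrite [RHS](bigID (mem A)) /= [X in _ + X]big1 ?addn0; last first.
  by move=> v /andP[_ /negbTE ->].
apply: eq_big => [v | v ->]; last by rewrite mul1n.
by apply/idP/andP => [vA | [] //]; rewrite (subsetP sAB).
Qed.

Lemma leq_card3 A B C :
  #|A| + #|B| + #|C| <= #|A :|: B :|: C| + #|A :&: B| + #|A :&: C| + #|B :&: C|.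
Proof.
have := cardsUI A B; have := cardsUI (A :|: B) C.
have : #|(A :|: B) :&: C| <= #|A :&: C| + #|B :&: C| by rewrite setIUl (leq_card_setU _ _).1.
lia.
Qed.

Lemma leq_sqr_sum A (F : T -> nat) :
  (\sum_(i in A) F i) * (\sum_(i in A) F i) <= #|A| * \sum_(i in A) F i * F i.
Proof.
set S2 := \sum_(i in A) F i * F i.
have -> : (\sum_(i in A) F i) * (\sum_(i in A) F i) = \sum_(i in A) \sum_(j in A) F i * F j.
  by rewrite big_distrl /=; apply: eq_bigr => i _; rewrite big_distrr.
have E : \sum_(i in A) \sum_(j in A) (F i * F i + F j * F j) = 2 * (#|A| * S2).
  rewrite (eq_bigr (fun i => #|A| * (F i * F i) + S2)) => [|i _]; last first.
    by rewrite big_split /= sum_nat_const.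
  by rewrite big_split /= sum_nat_const -big_distrr /= mulnC mul2n addnn.
rewrite -(leq_pmul2l (isT : 0 < 2)) -E big_distrr; apply: leq_sum => i _.
rewrite big_distrr; apply: leq_sum => j _.
change (2 * (F i * F j) <= F i * F i + F j * F j).
by have := (nat_AGM2 (F i) (F j)).1; rewrite -mulnn; lia.
Qed.

Lemma sum_rank_lt A (F : T -> T -> nat) : (forall u v, F u v = F v u) ->
  2 * \sum_(u in A) \sum_(v in A) (enum_rank u < enum_rank v) * F u v
    <= \sum_(u in A) \sum_(v in A) F u v.
Proof.
move=> FC; rewrite mul2n -addnn [X in X + _]exchange_big /= -big_split /=.
apply: leq_sum => u _; rewrite -big_split /=; apply: leq_sum => v _.
rewrite FC -mulnDl -[leqRHS]mul1n leq_mul2r.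
by case: ltngtP; rewrite ?orbT.
Qed.

Lemma exists_notin A (s : seq T) : size s < #|A| -> exists2 a, a \in A & a \notin s.
Proof.
move=> ltsA; have /subsetPn[a aA nas] : ~~ (A \subset s); last by exists a.
by apply: contraL ltsA => /subset_leq_card/leq_trans/(_ (card_size s)); rewrite -leqNgt.
Qed.

Lemma cardsD1_succ A x m : x \in A -> #|A| = m.+1 -> #|A :\ x| = m.
Proof. by move=> xA; rewrite (cardsD1 x) xA add1n => -[]. Qed.

End Counting.

Lemma nth_ord_inj (T : eqType) (x0 : T) (s : seq T) :
  uniq s -> injective (fun i : 'I_(size s) => nth x0 s i).
Proof. by move=> us i j /eqP; rewrite nth_uniq // => /eqP /val_inj. Qed.

Lemma P4E : P4 = [set [set inord 0; inord 1]; [set inord 1; inord 2]; [set inord 2; inord 3]].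
Proof.
apply/setP => e; rewrite !inE; apply/existsP/idP.
  case=> i /existsP[j /andP[/eqP ji /eqP ->]].
  rewrite -(inord_val i) -(inord_val j) ji; have := ltn_ord j; rewrite ji.
  by case: i {j ji} => -[|[|[|[|//]]]] ? //= _; rewrite eqxx ?orbT.
case/orP => [/orP[]|] /eqP ->; [exists (inord 0) | exists (inord 1) | exists (inord 2)];
  by apply/existsP; eexists; apply/andP; split; last exact: eqxx; rewrite !inordK.
Qed.

Lemma K3E : K3 = [set [set inord 0; inord 1]; [set inord 0; inord 2]; [set inord 1; inord 2]].
Proof.
apply/setP => e; rewrite !inE; apply/existsP/idP.
  case=> i /existsP[j /andP[ij /eqP ->]].
  rewrite -(inord_val i) -(inord_val j).
  by case: i j ij => -[|[|[|//]]] ? [[|[|[|//]]] ?] //= _; rewrite eqxx ?orbT.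
case/orP => [/orP[]|] /eqP ->; [exists (inord 0) | exists (inord 0) | exists (inord 1)];
  by apply/existsP; eexists; apply/andP; split; last exact: eqxx; rewrite !inordK.
Qed.

Lemma C5E : C5 = [set [set inord 0; inord 1]; [set inord 1; inord 2]; [set inord 2; inord 3];
                     [set inord 3; inord 4]; [set inord 4; inord 0]].
Proof.
apply/setP => e; rewrite !inE; apply/existsP/idP.
  case=> i /existsP[j /andP[/eqP ji /eqP ->]].
  rewrite -(inord_val i) -(inord_val j) ji.
  by case: i {j ji} => -[|[|[|[|[|//]]]]] /= _; rewrite eqxx ?orbT.
case/orP => [/orP[/orP[/orP[]|]|]|] /eqP ->;
  [exists (inord 0) | exists (inord 1) | exists (inord 2) | exists (inord 3) | exists (inord 4)];
  by apply/existsP; eexists; apply/andP; split; last exact: eqxx; rewrite !inordK.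
Qed.

Lemma P4_neq0 : P4 != set0.
Proof. by apply/set0Pn; exists [set inord 0; inord 1]; rewrite P4E !inE eqxx. Qed.

Lemma K3_neq0 : K3 != set0.
Proof. by apply/set0Pn; exists [set inord 0; inord 1]; rewrite K3E !inE eqxx. Qed.

Section Graphs.
Variable V : finType.
Implicit Types (G S : {set {set V}}) (x y : V).

(* Locked so that [inE] does not unfold membership in a neighbourhood. *)
Definition nb_def G x := [set y | [set x; y] \in G].
Fact nb_key : unit. Proof. exact: tt. Qed.
Definition nb := locked_with nb_key nb_def.

Lemma nbE G x y : (y \in nb G x) = ([set x; y] \in G).
Proof. by rewrite /nb; case: nb_key; rewrite inE. Qed.

Lemma set2C x y : [set x; y] = [set y; x].
Proof. exact: setUC. Qed.

Lemma nbC G x y : (y \in nb G x) = (x \in nb G y).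
Proof. by rewrite !nbE set2C. Qed.

Lemma simple_graph_neq G x y : simple_graph G -> [set x; y] \in G -> x != y.
Proof. by move=> /forallP /(_ [set x; y]) /implyP H /H; rewrite cards2; case: (x != y). Qed.

Definition path4 (a b c d : V) : {set {set V}} := [set [set a; b]; [set b; c]; [set c; d]].
Definition triangle (a b c : V) : {set {set V}} := [set [set a; b]; [set a; c]; [set b; c]].
Definition cycle5 (a b c d e : V) : {set {set V}} :=
  [set [set a; b]; [set b; c]; [set c; d]; [set d; e]; [set e; a]].

Lemma path4C a b c d : path4 a b c d = path4 d c b a.
Proof.
apply/setP => e; rewrite !inE (set2C d c) (set2C c b) (set2C b a).
by do 3!case: (_ == _).
Qed.

Lemma triangleC a b c : triangle a b c = triangle b a c.
Proof. by apply/setP => e; rewrite !inE (set2C b a); do 3!case: (_ == _). Qed.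

Lemma triangle_rot a b c : triangle a b c = triangle c a b.
Proof. by apply/setP => e; rewrite !inE (set2C c a) (set2C c b); do 3!case: (_ == _). Qed.

Lemma mem_path4 a b c d e x :
  e \in path4 a b c d -> x \in e -> x \in [:: a; b; c; d].
Proof. by rewrite !inE => /orP[/orP[]|] /eqP -> /set2P[] ->; rewrite eqxx ?orbT. Qed.

Lemma mem_triangle a b c e x : e \in triangle a b c -> x \in e -> x \in [:: a; b; c].
Proof. by rewrite !inE => /orP[/orP[]|] /eqP -> /set2P[] ->; rewrite eqxx ?orbT. Qed.

Lemma path4_sub G a b c d :
  path4 a b c d \subset G -> [/\ b \in nb G a, c \in nb G b & d \in nb G c].
Proof. by move/subsetP => sub; rewrite !nbE; split; apply: sub; rewrite !inE eqxx ?orbT. Qed.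

Lemma triangle_sub G a b c :
  triangle a b c \subset G -> [/\ b \in nb G a, c \in nb G a & c \in nb G b].
Proof. by move/subsetP => sub; rewrite !nbE; split; apply: sub; rewrite !inE eqxx ?orbT. Qed.

Lemma img_P4 (f : 'I_4 -> V) :
  img_edges f P4 = path4 (f (inord 0)) (f (inord 1)) (f (inord 2)) (f (inord 3)).
Proof. by rewrite /img_edges P4E !imsetU !imset_set1 !imsetU1 !imset_set1. Qed.

Lemma img_K3 (f : 'I_3 -> V) :
  img_edges f K3 = triangle (f (inord 0)) (f (inord 1)) (f (inord 2)).
Proof. by rewrite /img_edges K3E !imsetU !imset_set1 !imsetU1 !imset_set1. Qed.

Lemma img_C5 (f : 'I_5 -> V) : img_edges f C5 =
  cycle5 (f (inord 0)) (f (inord 1)) (f (inord 2)) (f (inord 3)) (f (inord 4)).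
Proof. by rewrite /img_edges C5E !imsetU !imset_set1 !imsetU1 !imset_set1. Qed.

Lemma is_copy_img (VH : finType) (EH : {set {set VH}}) (f : VH -> V) :
  injective f -> is_copy EH (img_edges f EH).
Proof.
move=> f_inj; apply/existsP; exists (finfun f).
apply/andP; split; first by apply/injectiveP => i j; rewrite !ffunE => /f_inj.
by apply/eqP/eq_imset => e; apply: eq_imset => v; rewrite ffunE.
Qed.

Lemma is_copy_P4 S : is_copy P4 S -> exists a b c d, uniq [:: a; b; c; d] /\ S = path4 a b c d.
Proof.
case/existsP => f /andP[/injectiveP f_inj /eqP ->]; rewrite img_P4.
do 4!eexists; split; last reflexivity.
by rewrite /= !inE !(inj_eq f_inj) -!(inj_eq val_inj) /= !inordK.
Qed.

Lemma is_copy_K3 S : is_copy K3 S -> exists a b c, uniq [:: a; b; c] /\ S = triangle a b c.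
Proof.
case/existsP => f /andP[/injectiveP f_inj /eqP ->]; rewrite img_K3.
do 3!eexists; split; last reflexivity.
by rewrite /= !inE !(inj_eq f_inj) -!(inj_eq val_inj) /= !inordK.
Qed.

Lemma is_copy_C5 S :
  is_copy C5 S -> exists a b c d e, uniq [:: a; b; c; d; e] /\ S = cycle5 a b c d e.
Proof.
case/existsP => f /andP[/injectiveP f_inj /eqP ->]; rewrite img_C5.
do 5!eexists; split; last reflexivity.
by rewrite /= !inE !(inj_eq f_inj) -!(inj_eq val_inj) /= !inordK.
Qed.

Lemma is_copy_path4 a b c d : uniq [:: a; b; c; d] -> is_copy P4 (path4 a b c d).
Proof.
by move=> abcd; have := is_copy_img P4 (nth_ord_inj (x0 := a) abcd); rewrite img_P4 /= !inordK.
Qed.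

Lemma is_copy_triangle a b c : uniq [:: a; b; c] -> is_copy K3 (triangle a b c).
Proof.
by move=> abc; have := is_copy_img K3 (nth_ord_inj (x0 := a) abc); rewrite img_K3 /= !inordK.
Qed.

Lemma is_copy_cycle5 a b c d e : uniq [:: a; b; c; d; e] -> is_copy C5 (cycle5 a b c d e).
Proof.
move=> abcde; have := is_copy_img C5 (nth_ord_inj (x0 := a) abcde).
by rewrite img_C5 /= !inordK.
Qed.

Definition copies (VH : finType) (EH : {set {set VH}}) G :=
  [set S : {set {set V}} | (S \subset G) && is_copy EH S].

Lemma NcountE (VH : finType) (EH : {set {set VH}}) G : Ncount EH G = #|copies EH G|.
Proof. by []. Qed.

Lemma leq_Ncount (VH : finType) (EH : {set {set VH}}) G G' :
  G \subset G' -> Ncount EH G <= Ncount EH G'.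
Proof.
move=> sGG'; apply/subset_leq_card/subsetP => S; rewrite !inE => /andP[sSG ->].
by rewrite (subset_trans sSG sGG').
Qed.

Lemma Ncount_set0 (VH : finType) (EH : {set {set VH}}) :
  EH != set0 -> Ncount EH (set0 : {set {set V}}) = 0.
Proof.
move=> EH0; apply/eqP; rewrite NcountE cards_eq0; apply/eqP/setP => S; rewrite !inE.
apply/negbTE; rewrite subset0; apply/andP => -[/eqP -> /existsP[f /andP[_]]].
by rewrite eq_sym imset_eq0 (negbTE EH0).
Qed.

Lemma FfreeP (VF : finType) (EF : {set {set VF}}) G :
  reflect (forall S, S \subset G -> ~~ is_copy EF S) (Ffree EF G).
Proof.
rewrite /Ffree NcountE cards_eq0; apply: (iffP eqP) => [noF S sSG | noF].
  apply/negP => FS; have : S \in copies EF G by rewrite inE sSG FS.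
  by rewrite noF inE.
by apply/setP => S; rewrite !inE; apply/negbTE; case: (boolP (S \subset G)) => // /noF.
Qed.

Lemma FfreeS (VF : finType) (EF : {set {set VF}}) G G' :
  G \subset G' -> Ffree EF G' -> Ffree EF G.
Proof. by move=> sGG' /FfreeP noF; apply/FfreeP => S /subset_trans/(_ sGG') /noF. Qed.

Definition del_vertex G x := [set e in G | x \notin e].

Lemma del_vertex_sub G x : del_vertex G x \subset G.
Proof. by apply/subsetP => e; rewrite inE => /andP[]. Qed.

Lemma del_vertex_simple G x : simple_graph G -> simple_graph (del_vertex G x).
Proof.
move=> /forall_inP sG; apply/forall_inP => e eGx.
by apply: sG; apply: (subsetP (del_vertex_sub G x)).
Qed.

Lemma not_sub_del_vertex G x S :
  S \subset G -> ~~ (S \subset del_vertex G x) -> exists2 e, e \in S & x \in e.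
Proof.
move=> sSG /subsetPn[e eS]; rewrite inE (subsetP sSG e eS) negbK => xe.
by exists e.
Qed.

Definition walks2 G x := [set p : V * V | (p.1 \in nb G x) && (p.2 \in nb G p.1)].
Definition walks3 G x := [set t : V * (V * V) | (t.1 \in nb G x) && (t.2 \in walks2 G t.1)].

Lemma card_walks2 G x : #|walks2 G x| = \sum_(v in nb G x) #|nb G v|.
Proof. exact: card_pairs_dep. Qed.

Lemma card_walks3 G x : #|walks3 G x| = \sum_(u in nb G x) \sum_(v in nb G u) #|nb G v|.
Proof. by rewrite /walks3 card_pairs_dep; apply: eq_bigr => u _; rewrite card_walks2. Qed.

Lemma Ncount_P4_del_vertex G x : Ncount P4 G <=
  Ncount P4 (del_vertex G x) + #|walks3 G x| + #|nb G x| * #|walks2 G x|.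
Proof.
set paths_end := [set path4 x t.1 t.2.1 t.2.2 | t in walks3 G x].
set paths_mid := [set path4 t.1 x t.2.1 t.2.2 | t in setX (nb G x) (walks2 G x)].
have sub : copies P4 G \subset copies P4 (del_vertex G x) :|: paths_end :|: paths_mid.
  apply/subsetP => S; rewrite inE => /andP[sSG P4S].
  case: (boolP (S \subset del_vertex G x)) => [sub | not_del]; first by rewrite !inE sub P4S.
  have [a [b [c [d [_ defS]]]]] := is_copy_P4 P4S; subst S.
  have [ab bc cd] := path4_sub sSG.
  have [ba cb dc] : [/\ a \in nb G b, b \in nb G c & c \in nb G d] by split; rewrite nbC.
  have [e eS /(mem_path4 eS)] := not_sub_del_vertex sSG not_del.
  rewrite !inE => /or4P[] /eqP xE; subst x; apply/orP.
  - by left; apply/orP; right; apply/imsetP; exists (b, (c, d)); rewrite // !inE /= ab bc cd.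
  - by right; apply/imsetP; exists (a, (c, d)); rewrite // !inE /= ba bc cd.
  - by right; apply/imsetP; exists (d, (b, a)); [rewrite !inE /= cd cb ba | exact: path4C].
  - left; apply/orP; right; apply/imsetP; exists (c, (b, a)); last exact: path4C.
    by rewrite !inE /= dc cb ba.
rewrite NcountE -cardsX; apply: (leq_trans (subset_leq_card sub)).
apply: leq_trans (leq_card_setU _ _).1 _; apply: leq_add; last exact: leq_imset_card.
by apply: leq_trans (leq_card_setU _ _).1 _; apply: leq_add => //; exact: leq_imset_card.
Qed.

Lemma Ncount_K3_del_vertex G x :
  Ncount K3 G <= Ncount K3 (del_vertex G x) + #|nb G x| * #|nb G x|.
Proof.
set triangles_at := [set triangle x t.1 t.2 | t in setX (nb G x) (nb G x)].
have sub : copies K3 G \subset copies K3 (del_vertex G x) :|: triangles_at.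
  apply/subsetP => S; rewrite inE => /andP[sSG K3S].
  case: (boolP (S \subset del_vertex G x)) => [sub | not_del]; first by rewrite !inE sub K3S.
  have [a [b [c [_ defS]]]] := is_copy_K3 K3S; subst S.
  have [ab ac bc] := triangle_sub sSG.
  have [ba ca cb] : [/\ a \in nb G b, a \in nb G c & b \in nb G c] by split; rewrite nbC.
  have [e eS /(mem_triangle eS)] := not_sub_del_vertex sSG not_del.
  rewrite !inE => /or3P[] /eqP xE; subst x; apply/orP; right; apply/imsetP.
  - by exists (b, c); rewrite // !inE /= ab ac.
  - by exists (a, c); [rewrite !inE /= ba bc | exact: triangleC].
  - by exists (a, b); [rewrite !inE /= ca cb | exact: triangle_rot].
rewrite NcountE -cardsX; apply: (leq_trans (subset_leq_card sub)).
by apply: leq_trans (leq_card_setU _ _).1 _; apply: leq_add => //; exact: leq_imset_card.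
Qed.

End Graphs.

Definition P4K3_count (V : finType) (G : {set {set V}}) := Ncount P4 G + Ncount K3 G.

(** * Arithmetic of the bound *)

(* [bip_P4 m] is the number of copies of P4 in the complete bipartite graph with parts of
   sizes [m./2] and [uphalf m]. *)
Definition half_pred_prod m := (m./2).-1 * (uphalf m).-1.
Definition bip_P4 m := m./2 * uphalf m * half_pred_prod m.

(* Four times the bound of [del_vertex_cost] on the copies of P4 and K3 through a vertex
   of degree [d] in a C5-free graph on [m] vertices. *)
Definition del_cost d m := d * (m * m + 12 * m) + 4 * (d * d * m) + 4 * (d * d).

Variant half_spec m : nat -> nat -> Prop :=
  | HalfEven k of m = k.*2 : half_spec m k k
  | HalfOdd k of m = k.*2.+1 : half_spec m k k.+1.

Lemma halfP m : half_spec m m./2 (uphalf m).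
Proof.
rewrite uphalf_half; have := odd_double_half m.
by case: (odd m) => /= Em; [apply: HalfOdd | apply: HalfEven]; rewrite -{1}Em.
Qed.

Lemma leq_half_pred_prod x y m :
  0 < x -> 0 < y -> x + y <= m -> x.-1 * y.-1 <= half_pred_prod m.
Proof.
rewrite /half_pred_prod; case: x y => [|x] [|y] // _ _ /=.
have amgm := (nat_AGM2 x y).1; rewrite -mulnn in amgm.
case: halfP => -[|k] ->; rewrite ?addnS //= => Hm.
- have Hxy : x + y <= k + k by lia.
  by have := leq_mul Hxy Hxy; lia.
- have Hxy : x + y <= k + k.+1 by lia.
  by have := leq_mul Hxy Hxy; lia.
Qed.

Lemma leq_bip_P4 L D m : 2 * L <= half_pred_prod m * D -> 2 * D <= m * m -> L <= bip_P4 m.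
Proof.
rewrite /bip_P4 => hL hm.
have hD : D <= 2 * (m./2 * uphalf m) by move: hm; case: halfP => k ->; lia.
by have := leq_mul (leqnn (half_pred_prod m)) hD; lia.
Qed.

Lemma leq_del_cost d d' m m' : d <= d' -> m <= m' -> del_cost d m <= del_cost d' m'.
Proof. by move=> hd hm; rewrite /del_cost; do ![apply: leq_add | apply: leq_mul]. Qed.

(* For [3 d <= m + 7] the cost is about [7 m^3 / 9], while [4 bip_P4] grows by about [m^3]
   per vertex; writing [m./2 = t + 50] makes the polynomial inequality linear in the
   monomials of [t], with a margin that absorbs the lower-order terms. *)
Lemma bip_P4S_gap d m : 100 <= m -> 3 * d <= m + 7 ->
  4 * bip_P4 m + del_cost d m.+1 < 4 * bip_P4 m.+1.
Proof.
move=> hm hd.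
have hB : 9 * del_cost d m.+1 <= 3 * (m + 7) * (m.+1 * m.+1 + 12 * m.+1)
    + 4 * ((m + 7) * (m + 7) * m.+1) + 4 * ((m + 7) * (m + 7)).
  have hd2 := leq_mul hd hd.
  have := leq_mul hd (leqnn (m.+1 * m.+1 + 12 * m.+1)).
  have := leq_mul hd2 (leqnn m.+1).
  rewrite /del_cost; lia.
rewrite /bip_P4 /half_pred_prod /= in hB *.
case: halfP hm hB => k -> hk.
all: have [t ->] : exists t, k = t + 50; first by exists (k - 50); lia.
all: lia.
Qed.

(** * C5-free graphs *)

Section C5free.
Variables (V : finType) (G : {set {set V}}) (U : {set V}).
Hypotheses (G_simple : simple_graph G) (G_C5free : Ffree C5 G)
  (G_on_U : forall e, e \in G -> e \subset U).
Local Notation N := (nb G).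

Lemma nb_subU x : N x \subset U.
Proof. by apply/subsetP => y; rewrite nbE => /G_on_U /subsetP; apply; rewrite !inE eqxx orbT. Qed.

Lemma leq_deg x : #|N x| <= #|U|.
Proof. exact/subset_leq_card/nb_subU. Qed.

Lemma mem_nbU x y : y \in N x -> y \in U.
Proof. exact/subsetP/nb_subU. Qed.

Lemma mem_nbU_center x y : y \in N x -> x \in U.
Proof. by rewrite nbC; apply: mem_nbU. Qed.

Lemma nb_neq x y : y \in N x -> x != y.
Proof. by rewrite nbE; apply: simple_graph_neq. Qed.

Lemma no_cycle5 a b c d e :
  b \in N a -> c \in N b -> d \in N c -> e \in N d -> a \in N e ->
  a != c -> a != d -> b != d -> b != e -> c != e -> False.
Proof.
move=> ab bc cd de ea ac ad bd be ce.
have abcde : uniq [:: a; b; c; d; e].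
  rewrite /= !inE !negb_or ac ad bd be ce (nb_neq ab) (nb_neq bc) (nb_neq cd) (nb_neq de).
  by rewrite eq_sym (nb_neq ea).
have sub : cycle5 a b c d e \subset G.
  by apply/subsetP => f; rewrite !inE => /orP[/orP[/orP[/orP[]|]|]|] /eqP ->; rewrite -nbE.
by move/FfreeP/(_ _ sub): G_C5free; rewrite is_copy_cycle5.
Qed.

(* Two vertices of N u with more than two neighbours in N u have no common neighbour a in
   N u: otherwise u, v2, a, v1 and a further neighbour of v1 in N u would form a C5. *)
Lemma sum_common_nb u : \sum_(v in N u) #|N v :&: N u| <= 3 * #|N u|.
Proof.
pose c v := #|N v :&: N u|; pose heavy := [set v in N u | 2 < c v].
have heavy_le1 a : a \in N u -> #|[set v in heavy | a \in N v]| <= 1.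
  move=> au; apply/card_le1_eqP => v1 v2; rewrite !inE.
  case/andP=> /andP[v1u c1] av1 /andP[/andP[v2u _] av2]; apply/eqP; apply: contraT => v12.
  have [b] := exists_notin (s := [:: a; v2]) c1.
  rewrite !inE negb_or => /andP[bv1 bu] /andP[ba bv2].
  have [v1a ub] : v1 \in N a /\ u \in N b by split; rewrite nbC.
  by case: (no_cycle5 v2u av2 v1a bv1 ub); rewrite ?(nb_neq au) ?(nb_neq v1u) // eq_sym.
have heavyS : heavy \subset N u by apply/subsetP => v; rewrite inE => /andP[].
apply: (@leq_trans (\sum_(v in N u) (2 + (v \in heavy) * c v))).
  by apply: leq_sum => v vu; rewrite inE vu /=; case: ltnP => //= ?; rewrite mul1n leq_addl.
rewrite big_split /= sum_nat_const -sum_indicator_sub // mulnC [3 * _]mulSn addnC leq_add2r.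
rewrite (eq_bigr (fun v => #|[set a in N u | a \in N v]|)) => [|v _].
  by rewrite double_count -[leqRHS]sum1_card leq_sum.
by apply: eq_card => a; rewrite !inE andbC.
Qed.

Lemma sum_nb_deg u : \sum_(v in N u) #|N v| <= #|N u| * (#|U| - #|N u|) + 3 * #|N u|.
Proof.
under eq_bigr do rewrite -(cardsID (N u)).
rewrite big_split /= addnC leq_add ?sum_common_nb // -sum_nat_const.
apply: leq_sum => v _; rewrite -(cardsDS (nb_subU u)).
exact/subset_leq_card/setSD/nb_subU.
Qed.

Lemma del_vertex_cost x :
  4 * P4K3_count G <= 4 * P4K3_count (del_vertex G x) + del_cost #|N x| #|U|.
Proof.
have P4x := Ncount_P4_del_vertex G x; have K3x := Ncount_K3_del_vertex G x.
rewrite card_walks3 card_walks2 in P4x.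
set m := #|U|; set d := #|N x|.
have walks3_le : 4 * (\sum_(u in N x) \sum_(v in N u) #|N v|) <= d * (m * m + 12 * m).
  rewrite big_distrr /= -sum_nat_const; apply: leq_sum => u _.
  have := sum_nb_deg u; have := leq_deg u; rewrite -/m.
  have := (nat_AGM2 #|N u| (m - #|N u|)).1; rewrite -mulnn; lia.
have walks2_le : \sum_(v in N x) #|N v| <= d * m.
  by rewrite -sum_nat_const; apply: leq_sum => v _; apply: leq_deg.
have := leq_mul (leqnn d) walks2_le.
rewrite /P4K3_count /del_cost; lia.
Qed.

Lemma del_vertex_on x e : e \in del_vertex G x -> e \subset U :\ x.
Proof.
rewrite inE => /andP[/G_on_U eU xe]; apply/subsetP => y ye.
by rewrite !inE (subsetP eU y ye) andbT; apply: contraNneq xe => <-.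
Qed.

Lemma common_nb_le2 u v a b : v \in N u -> a \in N u -> b \in N v ->
  a != v -> b != u -> b != a -> #|N a :&: N b| <= 2.
Proof.
move=> vu au bv av bu ba; apply: leq_trans (card_size [:: u; v]).
apply/subset_leq_card/subsetP => z; rewrite !inE => /andP[za zb].
apply/negPn/negP; rewrite negb_or => /andP[zu zv].
have [bz vb uv] : [/\ b \in N z, v \in N b & u \in N v] by split; rewrite nbC.
by apply: (no_cycle5 au za bz vb uv); rewrite // eq_sym.
Qed.

(* A triangle uvw has neighbours a of u, b of v, c of w outside it, all distinct; by
   [common_nb_le2] the neighbourhoods of a, b and c overlap in at most 6 vertices, so
   they cannot all have more than (#|U| + 6) / 3 elements. *)
Lemma K3free_of_min_deg :
  8 <= #|U| -> (forall x, x \in U -> #|U| + 7 <= 3 * #|N x|) -> Ffree K3 G.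
Proof.
move=> U8 min_deg; have deg5 x y : y \in N x -> 4 < #|N x|.
  by move/mem_nbU_center/min_deg; lia.
apply/FfreeP => S sSG; apply/negP => /is_copy_K3[u [v [w [_ defS]]]]; subst S.
have [vu wu wv] := triangle_sub sSG.
have [uv vw] : u \in N v /\ v \in N w by split; rewrite nbC.
have [a au] := exists_notin (s := [:: v; w]) (ltnW (ltnW (deg5 _ _ vu))).
rewrite !inE negb_or => /andP[av aw].
have [b bv] := exists_notin (s := [:: u; w; a]) (ltnW (deg5 _ _ uv)).
rewrite !inE !negb_or => /and3P[bu bw ba].
have [c cw] := exists_notin (s := [:: u; v; a; b]) (deg5 _ _ vw).
rewrite !inE !negb_or => /and4P[cu cv ca cb].
have Nab := common_nb_le2 vu au bv av bu ba.
have Nac := common_nb_le2 wu au cw aw cu ca.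
have Nbc := common_nb_le2 wv bv cw bw cv cb.
have NabcU : #|N a :|: N b :|: N c| <= #|U|.
  by apply: subset_leq_card; rewrite !subUset !nb_subU.
have Nabc := leq_card3 (N a) (N b) (N c).
have := min_deg a (mem_nbU au); have := min_deg b (mem_nbU bv); have := min_deg c (mem_nbU cw).
by clear -Nab Nac Nbc NabcU Nabc; lia.
Qed.

Section K3free.
Hypothesis G_K3free : Ffree K3 G.

Lemma no_triangle u v w : v \in N u -> w \in N u -> w \in N v -> False.
Proof.
move=> vu wu wv; have uvw : uniq [:: u; v; w].
  by rewrite /= !inE negb_or (nb_neq vu) (nb_neq wu) (nb_neq wv).
have sub : triangle u v w \subset G.
  by apply/subsetP => f; rewrite !inE => /orP[/orP[]|] /eqP ->; rewrite -nbE.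
by move/FfreeP/(_ _ sub): G_K3free; rewrite is_copy_triangle.
Qed.

Lemma deg_edge u v : v \in N u -> #|N u| + #|N v| <= #|U|.
Proof.
move=> vu; rewrite -cardsUI.
have -> : N u :&: N v = set0.
  by apply/setP => w; rewrite !inE; apply/negbTE/andP => -[wu wv]; apply: no_triangle vu wu wv.
by rewrite cards0 addn0; apply/subset_leq_card; rewrite subUset !nb_subU.
Qed.

(* A path a-u-v-d is indexed by its middle edge uv, oriented by [enum_rank]. *)
Lemma Ncount_P4_oriented : Ncount P4 G <= \sum_(u in U) \sum_(v in U)
  (enum_rank u < enum_rank v) * ((v \in N u) * (#|N u|.-1 * #|N v|.-1)).
Proof.
pose up u := [set v in N u | enum_rank u < enum_rank v].
pose fan u := [set p : V * (V * V) | (p.1 \in up u) && (p.2 \in setX (N u :\ p.1) (N p.1 :\ u))].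
pose oriented := [set t : V * (V * (V * V)) | (t.1 \in U) && (t.2 \in fan t.1)].
have sub : copies P4 G \subset [set path4 t.2.2.1 t.1 t.2.1 t.2.2.2 | t in oriented].
  apply/subsetP => S; rewrite inE => /andP[sSG /is_copy_P4[a [b [c [d [abcd defS]]]]]].
  subst S; have [ab bc cd] := path4_sub sSG; apply/imsetP.
  move: abcd; rewrite /= !inE !negb_or => /and4P[/and3P[_ ac _] /andP[_ bd] _ _].
  have [ba cb] : a \in N b /\ b \in N c by split; rewrite nbC.
  case: (ltngtP (enum_rank b) (enum_rank c)) => [bc_lt | cb_lt | /val_inj/enum_rank_inj bc_eq].
  - exists (b, (c, (a, d))); rewrite // !inE /= (mem_nbU_center bc) bc bc_lt ba cd.
    by rewrite ac eq_sym bd.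
  - exists (c, (b, (d, a))); last exact: path4C.
    by rewrite !inE /= (mem_nbU bc) cb cb_lt cd ba ac eq_sym bd.
  - by move: (nb_neq bc); rewrite bc_eq eqxx.
rewrite NcountE (leq_trans (subset_leq_card sub)) // (leq_trans (leq_imset_card _ _)) //.
rewrite (card_pairs_dep U fan); apply: leq_sum => u _.
rewrite (card_pairs_dep (up u) (fun v => setX (N u :\ v) (N v :\ u))).
rewrite (sum_indicator_sub (B := U)); last by apply/subsetP => v; rewrite inE => /andP[/mem_nbU].
apply: leq_sum => v _; rewrite inE cardsX; case vu: (v \in N u); rewrite //= mul1n.
have uv : u \in N v by rewrite nbC.
by rewrite [#|N u|](cardsD1 v) [#|N v|](cardsD1 u) vu uv.
Qed.

Lemma sum_edge_weight : \sum_(u in U) \sum_(v in N u) #|N u|.-1 * #|N v|.-1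
  <= half_pred_prod #|U| * \sum_(u in U) #|N u|.
Proof.
rewrite big_distrr /=; apply: leq_sum => u _; rewrite mulnC -sum_nat_const.
apply: leq_sum => v vu; apply: leq_half_pred_prod (deg_edge vu); apply/card_gt0P.
  by exists v.
by exists u; rewrite nbC.
Qed.

(* Double counting gives \sum_u d(u)^2 <= #|U| * \sum_u d(u) / 2, and Cauchy-Schwarz
   (\sum_u d(u))^2 <= #|U| * \sum_u d(u)^2. *)
Lemma mantel : 2 * \sum_(u in U) #|N u| <= #|U| * #|U|.
Proof.
set D := \sum_(u in U) #|N u|; set m := #|U|.
have sum_sq : \sum_(u in U) \sum_(v in N u) (#|N u| + #|N v|) = 2 * \sum_(u in U) #|N u| * #|N u|.
  under eq_bigr do rewrite big_split /= sum_nat_const.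
  rewrite big_split /= mul2n -addnn; congr (_ + _).
  under eq_bigr do rewrite (sum_indicator_sub _ (nb_subU _)).
  rewrite exchange_big /=; apply: eq_bigr => v _; rewrite -big_distrl /= -sum1_card.
  rewrite (sum_indicator_sub _ (nb_subU v)); congr (_ * _).
  by apply: eq_bigr => u _; rewrite muln1 nbC.
have sum_le : \sum_(u in U) \sum_(v in N u) (#|N u| + #|N v|) <= m * D.
  rewrite /D big_distrr /=; apply: leq_sum => u _.
  by rewrite mulnC -sum_nat_const; apply: leq_sum => v; apply: deg_edge.
have := leq_sqr_sum U (fun u => #|N u|); rewrite -/D -/m => cs.
have : (2 * D) * D <= (m * m) * D.
  by have := leq_mul (leqnn m) (leq_trans (eq_leq (esym sum_sq)) sum_le); lia.
by case: (posnP D) => [-> | D_gt0]; rewrite ?muln0 // leq_pmul2r.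
Qed.

Lemma P4K3_count_K3free : P4K3_count G <= bip_P4 #|U|.
Proof.
rewrite /P4K3_count (eqP G_K3free) addn0.
apply: (leq_bip_P4 _ mantel); apply: leq_trans sum_edge_weight.
apply: leq_trans (leq_mul (leqnn 2) Ncount_P4_oriented) _.
apply: leq_trans (sum_rank_lt _ _) _ => [u v | ]; first by rewrite nbC [#|N u|.-1 * _]mulnC.
by apply: eq_leq; apply: eq_bigr => u _; rewrite -(sum_indicator_sub _ (nb_subU u)).
Qed.

End K3free.

End C5free.

(** * Induction on the number of vertices *)

Definition C5free_on (V : finType) (G : {set {set V}}) (U : {set V}) :=
  [/\ simple_graph G, Ffree C5 G & forall e, e \in G -> e \subset U].

Section Induction.
Variable V : finType.
Implicit Types (G : {set {set V}}) (U : {set V}).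

Lemma C5free_on_del G U x : C5free_on G U -> C5free_on (del_vertex G x) (U :\ x).
Proof.
case=> sG fG GU; split; first exact: del_vertex_simple.
  exact: FfreeS (del_vertex_sub G x) fG.
exact: del_vertex_on.
Qed.

Lemma P4K3_count_empty G U : C5free_on G U -> #|U| = 0 -> P4K3_count G = 0.
Proof.
case=> /forall_inP sG _ GU /eqP; rewrite cards_eq0 => /eqP U0.
have -> : G = set0.
  apply/setP => e; rewrite inE; apply/negbTE/negP => eG.
  have := sG e eG; have := GU e eG; rewrite U0 subset0 => /eqP ->.
  by rewrite cards0.
by rewrite /P4K3_count !Ncount_set0 ?P4_neq0 ?K3_neq0.
Qed.

Lemma P4K3_count_crude m G U : C5free_on G U -> #|U| = m ->
  4 * P4K3_count G <= m * del_cost m m.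
Proof.
elim: m G U => [|m IH] G U GU_C5 Um; first by rewrite (P4K3_count_empty GU_C5 Um).
have [x xU] : exists x, x \in U by apply/card_gt0P; rewrite Um.
case: (GU_C5) => sG fG GU; have := del_vertex_cost sG fG GU x.
have := IH _ _ (C5free_on_del x GU_C5) (cardsD1_succ xU Um).
have : del_cost #|nb G x| #|U| <= del_cost m.+1 m.+1.
  by apply: leq_del_cost; rewrite -Um ?(leq_deg GU).
have := leq_mul (leqnn m) (leq_del_cost (leqnSn m) (leqnSn m)).
rewrite mulSn; lia.
Qed.

(* The slack [C0 - m] pays for the crude bound below 100 vertices; above, each deletion
   step gains at least one unit by [bip_P4S_gap]. *)
Definition C0 := 100 * del_cost 100 100 + 100.

Lemma P4K3_count_potential m G U : C5free_on G U -> #|U| = m ->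
  4 * P4K3_count G <= 4 * bip_P4 m + (C0 - m).
Proof.
elim: m G U => [|m IH] G U GU_C5 Um; first by rewrite (P4K3_count_empty GU_C5 Um).
case: (leqP m.+1 100) => [small | large].
  have := P4K3_count_crude GU_C5 Um.
  have : m.+1 * del_cost m.+1 m.+1 <= 100 * del_cost 100 100 by rewrite leq_mul ?leq_del_cost.
  rewrite /C0; lia.
case: (GU_C5) => sG fG GU.
case: (boolP [exists x in U, 3 * #|nb G x| <= m + 7]) => [/exists_inP[x xU low] | /exists_inP high].
  have := del_vertex_cost sG fG GU x; rewrite Um.
  have := IH _ _ (C5free_on_del x GU_C5) (cardsD1_succ xU Um).
  have := bip_P4S_gap large low; lia.
have min_deg x : x \in U -> #|U| + 7 <= 3 * #|nb G x|.
  by move=> xU; rewrite Um ltnNge; apply/negP => low; apply: high; exists x.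
have U8 : 8 <= #|U| by rewrite Um (leq_trans _ large).
have := P4K3_count_K3free sG fG GU (K3free_of_min_deg sG fG GU U8 min_deg).
by rewrite Um; lia.
Qed.

Lemma P4K3_count_le G U : C5free_on G U -> C0 <= #|U| -> P4K3_count G <= bip_P4 #|U|.
Proof.
move=> GU_C5 large; have := P4K3_count_potential GU_C5 (erefl _).
by rewrite (eqP large) addn0 leq_mul2l.
Qed.

End Induction.

(** * The balanced complete bipartite graph *)

Section CompleteBipartite.
Variables (V : finType) (A : {set V}).

Definition complete_bip : {set {set V}} := [set [set x; y] | x in A, y in ~: A].

Lemma set2_sep_eq p q x y : p \in A -> q \notin A -> x \in A -> y \notin A ->
  [set p; q] = [set x; y] -> p = x /\ q = y.
Proof.
move=> pA qA xA yA E.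
have /set2P[-> | py] : p \in [set x; y] by rewrite -E set21.
  have /set2P[qx | //] : q \in [set x; y] by rewrite -E set22.
  by move: qA; rewrite qx xA.
by move: yA; rewrite -py pA.
Qed.

Lemma complete_bip_edge p q : [set p; q] \in complete_bip -> (p \in A) = (q \notin A).
Proof.
case/imset2P => x y xA; rewrite inE => yA E.
have /set2P xPQ : x \in [set p; q] by rewrite E set21.
have /set2P yPQ : y \in [set p; q] by rewrite E set22.
by case: xPQ yPQ => ? [] ?; subst; move: xA yA; case: (p \in A); case: (q \in A).
Qed.

Lemma complete_bip_simple : simple_graph complete_bip.
Proof.
apply/forall_inP => e /imset2P[x y xA]; rewrite inE => yA ->.
by rewrite cards2; case: (x =P y) yA => [<- | //]; rewrite xA.
Qed.

Lemma complete_bip_C5free : Ffree C5 complete_bip.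
Proof.
apply/FfreeP => S /subsetP sSK; apply/negP => /is_copy_C5[a [b [c [d [e [_ defS]]]]]].
subst S; have edge x y : [set x; y] \in cycle5 a b c d e -> (x \in A) = (y \notin A).
  by move/sSK/complete_bip_edge.
move: (edge a b) (edge b c) (edge c d) (edge d e) (edge e a); rewrite !inE !eqxx ?orbT.
move=> /(_ isT) -> /(_ isT) -> /(_ isT) -> /(_ isT) -> /(_ isT).
by rewrite !negbK; case: (e \in A).
Qed.

Lemma mem_path4_sep p0 p1 p2 p3 x y :
  p0 \in A -> p1 \notin A -> p2 \in A -> p3 \notin A -> x \in A -> y \notin A ->
  [set x; y] \in path4 p0 p1 p2 p3 ->
  [\/ x = p0 /\ y = p1, x = p2 /\ y = p1 | x = p2 /\ y = p3].
Proof.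
move=> p0A p1A p2A p3A xA yA; rewrite !inE => /orP[/orP[] | ] /eqP E.
- by apply: Or31; apply: set2_sep_eq E.
- by apply: Or32; rewrite (set2C p1) in E; apply: set2_sep_eq E.
- by apply: Or33; apply: set2_sep_eq E.
Qed.

Definition dpairs (X : {set V}) := [set q : V * V | (q.1 \in X) && (q.2 \in X :\ q.1)].

Lemma card_dpairs X : #|dpairs X| = #|X| * #|X|.-1.
Proof.
rewrite (card_pairs_dep X (fun a => X :\ a)) -sum_nat_const; apply: eq_bigr => a aX.
by rewrite [#|X|](cardsD1 a) aX.
Qed.

(* A path p0-p1-p2-p3 with p0, p2 in A is determined by its edges, each of which
   determines its endpoint in A and its endpoint outside A. *)
Lemma complete_bip_P4 : #|A| * #|~: A| * (#|A|.-1 * #|~: A|.-1) <= Ncount P4 complete_bip.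
Proof.
pose D := setX (dpairs A) (dpairs (~: A)).
pose h (t : (V * V) * (V * V)) := path4 t.1.1 t.2.1 t.1.2 t.2.2.
have inj : {in D &, injective h}.
  move=> [[p0 p2] [p1 p3]] [[q0 q2] [q1 q3]]; rewrite !inE /=.
  case/andP=> /andP[p0A /andP[p20 p2A]] /andP[p1A /andP[p31 p3A]].
  case/andP=> /andP[q0A /andP[q20 q2A]] /andP[q1A /andP[q31 q3A]] E.
  have mem_p x y : x \in A -> y \notin A -> [set x; y] \in h (q0, q2, (q1, q3)) ->
      [\/ x = p0 /\ y = p1, x = p2 /\ y = p1 | x = p2 /\ y = p3].
    by rewrite -E; apply: mem_path4_sep.
  have e01 : [set q0; q1] \in h (q0, q2, (q1, q3)) by rewrite !inE eqxx.
  have e21 : [set q2; q1] \in h (q0, q2, (q1, q3)) by rewrite !inE (set2C q2) eqxx orbT.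
  have e23 : [set q2; q3] \in h (q0, q2, (q1, q3)) by rewrite !inE eqxx orbT.
  move/eqP: p20 => p20; move/eqP: p31 => p31; move/eqP: q20 => q20; move/eqP: q31 => q31.
  case: (mem_p _ _ q0A q1A e01) => -[? ?]; case: (mem_p _ _ q2A q1A e21) => -[? ?];
    by case: (mem_p _ _ q2A q3A e23) => -[? ?]; subst; congruence.
rewrite -mulnACA -!card_dpairs -cardsX -(card_in_imset inj) NcountE.
apply/subset_leq_card/subsetP => S /imsetP[[[p0 p2] [p1 p3]]].
rewrite !inE /= => /andP[/andP[p0A /andP[p20 p2A]] /andP[p1A /andP[p31 p3A]]] ->.
have sep x y : x \in A -> y \notin A -> x != y by move=> xA; apply: contraNneq => <-.
apply/andP; split.
  apply/subsetP => e; rewrite !inE => /orP[/orP[] | ] /eqP ->; apply/imset2P.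
  - by exists p0 p1; rewrite ?inE.
  - by exists p2 p1; rewrite ?inE // set2C.
  - by exists p2 p3; rewrite ?inE.
apply: is_copy_path4; rewrite /= !inE !negb_or (sep _ _ p0A p1A) (sep _ _ p0A p3A).
by rewrite (sep _ _ p2A p3A) (eq_sym p1 p2) (sep _ _ p2A p1A) (eq_sym p0) p20 (eq_sym p1) p31.
Qed.

End CompleteBipartite.

Lemma exists_bip_graph n : exists K : {set {set 'I_n}},
  [/\ simple_graph K, Ffree C5 K & bip_P4 n <= Ncount P4 K].
Proof.
have half_le : n./2 <= n by rewrite -{2}(odd_double_half n) -addnn addnA leq_addl.
pose A := [set widen_ord half_le i | i : 'I_n./2].
have cardA : #|A| = n./2.
  by rewrite card_imset ?card_ord // => i j /(congr1 val) ij; apply: val_inj.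
have cardAc : #|~: A| = uphalf n.
  have := cardsC A; rewrite cardA card_ord uphalf_half.
  have := odd_double_half n; lia.
exists (complete_bip A); split; [exact: complete_bip_simple | exact: complete_bip_C5free |].
by rewrite /bip_P4 /half_pred_prod -cardA -cardAc complete_bip_P4.
Qed.

Section ExtremalNumbers.
Variables (n : nat) (V1 V2 VF : finType).
Variables (H1 : {set {set V1}}) (H2 : {set {set V2}}) (F : {set {set VF}}).
Variable G : {set {set 'I_n}}.
Hypotheses (G_simple : simple_graph G) (G_Ffree : Ffree F G).

Lemma leq_ex : Ncount H1 G <= ex n H1 F.
Proof. by apply: (@leq_bigmax_cond _ (fun G => simple_graph G && Ffree F G)); rewrite G_simple. Qed.

Lemma leq_ex2 : Ncount H1 G + Ncount H2 G <= ex2 n H1 H2 F.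
Proof. by apply: (@leq_bigmax_cond _ (fun G => simple_graph G && Ffree F G)); rewrite G_simple. Qed.

Lemma leq_excol C : Ncount H1 (G :&: C) + Ncount H2 (G :\: C) <= excol n H1 H2 F.
Proof.
pose P (GC : {set {set 'I_n}} * {set {set 'I_n}}) := simple_graph GC.1 && Ffree F GC.1.
by apply: (@leq_bigmax_cond _ P _ (G, C)); rewrite /P /= G_simple.
Qed.

End ExtremalNumbers.

Section Extremal.
Variables (n : nat) (n_large : C0 <= n).

Lemma P4K3_count_n (G : {set {set 'I_n}}) :
  simple_graph G -> Ffree C5 G -> P4K3_count G <= bip_P4 n.
Proof.
move=> sG fG; have GT : C5free_on G setT by split=> // e _; apply: subsetT.
by have := P4K3_count_le GT; rewrite cardsT card_ord; apply.
Qed.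

Lemma ex_P4_C5 : ex n P4 C5 = bip_P4 n.
Proof.
apply/eqP; rewrite eqn_leq; apply/andP; split.
  by apply/bigmax_leqP => G /andP[sG fG]; apply: leq_trans (P4K3_count_n sG fG); apply: leq_addr.
by have [K [sK fK /leq_trans]] := exists_bip_graph n; apply; apply: leq_ex.
Qed.

Lemma ex_K3_C5_le : ex n K3 C5 <= bip_P4 n.
Proof.
by apply/bigmax_leqP => G /andP[sG fG]; apply: leq_trans (P4K3_count_n sG fG); apply: leq_addl.
Qed.

Lemma ex2_P4_K3_C5 : ex2 n P4 K3 C5 = bip_P4 n.
Proof.
apply/eqP; rewrite eqn_leq; apply/andP; split.
  by apply/bigmax_leqP => G /andP[sG fG]; apply: P4K3_count_n.
have [K [sK fK /leq_trans]] := exists_bip_graph n; apply.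
exact: leq_trans (leq_addr (Ncount K3 K) _) (leq_ex2 _ _ sK fK).
Qed.

Lemma excol_P4_K3_C5 : excol n P4 K3 C5 = bip_P4 n.
Proof.
apply/eqP; rewrite eqn_leq; apply/andP; split.
  apply/bigmax_leqP => -[G C] /andP[/= sG fG]; apply: leq_trans (P4K3_count_n sG fG).
  by apply: leq_add; apply: leq_Ncount; [apply: subsetIl | apply: subsetDl].
have [K [sK fK /leq_trans]] := exists_bip_graph n; apply.
by have := leq_excol P4 K3 sK fK setT; rewrite setIT; apply: leq_trans; apply: leq_addr.
Qed.

End Extremal.

Theorem mainTheorem5 :
  exists n0 : nat, forall n : nat, n0 <= n ->
    let M := maxn (ex n P4 C5) (ex n K3 C5) in
    (* color-resistant *)
    excol n P4 K3 C5 = M /\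
    (* resistant *)
    (exists G : {set {set 'I_n}},
        [/\ simple_graph G, Ffree C5 G,
            Ncount P4 G = M \/ Ncount K3 G = M &
            ex2 n P4 K3 C5 = Ncount P4 G + Ncount K3 G]).
Proof.
exists C0 => n n_large M.
have -> : M = bip_P4 n by rewrite /M ex_P4_C5 //; apply/maxn_idPl/ex_K3_C5_le.
have [K [sK fK P4K]] := exists_bip_graph n.
have := P4K3_count_n n_large sK fK; rewrite /P4K3_count => K_le.
have [P4K_eq K3K_eq] : Ncount P4 K = bip_P4 n /\ Ncount K3 K = 0 by lia.
split; first exact: excol_P4_K3_C5.
exists K; split => //; first by left.
by rewrite ex2_P4_K3_C5 // P4K_eq K3K_eq addn0.
Qed.
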